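(* Let $Q$ be a quantale with m-filters $(\mathcal{F}_k)_{k=1}^\infty$ such that $\mathcal{F}=\bigcap_{k=1}^\infty\mathcal{F}_k$ is locally solid, and let $M$ be a shrinkable $Q$-module such that every $\mathcal{F}_k$ is 1-step over $M$. Then the map $M_\mathcal{F}\to\prod_{k=1}^\infty M_{\mathcal{F}_k}$, $\overline x\mapsto(\overline x)_k$, is injective. (More precisely: for $a,b\in M$, if $a\preceq^1_{\mathcal{F}_k}b$ for all $k$, then $a\preceq^1_\mathcal{F}b$.)
   Context: A quantale is a poset $Q$ with all nonempty joins $\sum$ (no bottom required), top $1$, commutative associative multiplication with unit $1$ distributing over nonempty joins. A $Q$-module is a poset $M$ with all nonempty joins and an associative unital action distributing over nonempty joins in each variable. An m-filter is a subset of $Q$ containing $1$, upward closed and closed under multiplication. $\mathcal{F}$ is locally solid if there is a nonempty $W\subseteq Q$ with $\sum W=1$ such that for every $w\in W$ and every nonempty family $(x_i)_{i\in I}$ with $\sum_ix_i\in\mathcal{F}$ there exist $t\in\mathcal{F}$ and finite nonempty $I_0\subseteq I$ with $tw\le\sum_{i\in I_0}x_i$. For $x,x_i$ write $x\le^*\sum_ix_i$ if $x\le\sum_{i\in I_0}x_i$ for some finite nonempty $I_0$; $M$ is shrinkable if whenever $x\le\sum_ix_i$ there is a family $(y_j)$ with $x=\sum_jy_j$ and each $y_j\le^*\sum_ix_i$. For $a,b\in M$: $a\preceq^1_\mathcal{F}b$ means there are families $(a_i)$ in $M$, $(s_i)$ in $\mathcal{F}$ with $a\le\sum a_i$ and $s_ia_i\le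 b$; $a\preceq^n_\mathcal{F}b$ means a chain of $n$ such steps; $a\preceq_\mathcal{F}b$ means $a\preceq^n_\mathcal{F}b$ for some $n\ge1$. $M_\mathcal{F}$ is $M$ modulo $a\sim b\iff a\preceq_\mathcal{F}b\preceq_\mathcal{F}a$, with classes $\overline a$. $\mathcal{F}$ is localizable over $M$ if for each $b$ there is $n_b$ with $a\preceq_\mathcal{F}b\Rightarrow a\preceq^{n_b}_\mathcal{F}b$; 1-step over $M$ if localizable and $a\preceq_\mathcal{F}b\Rightarrow a\preceq^1_\mathcal{F}b$. *)

From Stdlib Require Import List.
Import ListNotations.

Record Quantale := {
  qcar :> Type;
  qle : qcar -> qcar -> Prop;
  qsup : forall I : Type, (I -> qcar) -> qcar;
  qone : qcar;
  qmul : qcar -> qcar -> qcar;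
  qle_refl : forall x, qle x x;
  qle_trans : forall x y z, qle x y -> qle y z -> qle x z;
  qle_antisym : forall x y, qle x y -> qle y x -> x = y;
  qsup_ub : forall (I : Type) (f : I -> qcar), inhabited I -> forall i, qle (f i) (qsup I f);
  qsup_least : forall (I : Type) (f : I -> qcar) (u : qcar), inhabited I ->
      (forall i, qle (f i) u) -> qle (qsup I f) u;
  qone_top : forall x, qle x qone;
  qmul_comm : forall x y, qmul x y = qmul y x;
  qmul_assoc : forall x y z, qmul x (qmul y z) = qmul (qmul x y) z;
  qmul_one : forall x, qmul qone x = x;
  qmul_sup : forall x (I : Type) (f : I -> qcar), inhabited I ->
      qmul x (qsup I f) = qsup I (fun i => qmul x (f i))
}.

Record QModule (Q : Quantale) := {
  mcar :> Type;
  mle : mcar -> mcar -> Prop;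
  msup : forall I : Type, (I -> mcar) -> mcar;
  mact : Q -> mcar -> mcar;
  mle_refl : forall x, mle x x;
  mle_trans : forall x y z, mle x y -> mle y z -> mle x z;
  mle_antisym : forall x y, mle x y -> mle y x -> x = y;
  msup_ub : forall (I : Type) (f : I -> mcar), inhabited I -> forall i, mle (f i) (msup I f);
  msup_least : forall (I : Type) (f : I -> mcar) (u : mcar), inhabited I ->
      (forall i, mle (f i) u) -> mle (msup I f) u;
  mact_assoc : forall (q r : Q) x, mact (qmul Q q r) x = mact q (mact r x);
  mact_one : forall x, mact (qone Q) x = x;
  mact_supl : forall (I : Type) (f : I -> Q) x, inhabited I ->
      mact (qsup Q I f) x = msup I (fun i => mact (f i) x);
  mact_supr : forall (q : Q) (I : Type) (f : I -> mcar), inhabited I ->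
      mact q (msup I f) = msup I (fun i => mact q (f i))
}.

Arguments mle {Q} _ _ _.
Arguments msup {Q} _ _ _.
Arguments mact {Q} _ _ _.

Section Defs.
Variable Q : Quantale.

Definition mfilter (F : Q -> Prop) : Prop :=
  F (qone Q) /\
  (forall x y, F x -> qle Q x y -> F y) /\
  (forall x y, F x -> F y -> F (qmul Q x y)).

Definition qfinsup {I : Type} (x : I -> Q) (l : list I) : Q :=
  qsup Q {i : I | In i l} (fun i => x (proj1_sig i)).

Definition locally_solid (F : Q -> Prop) : Prop :=
  exists W : Q -> Prop,
    (exists w, W w) /\
    qsup Q {w : Q | W w} (@proj1_sig _ _) = qone Q /\
    forall w, W w ->
      forall (I : Type) (x : I -> Q), inhabited I -> F (qsup Q I x) ->
        exists t, F t /\ exists l : list I, l <> [] /\ qle Q (qmul Q t w) (qfinsup x l).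

Variable M : QModule Q.

Definition mfinsup {I : Type} (x : I -> M) (l : list I) : M :=
  msup M {i : I | In i l} (fun i => x (proj1_sig i)).

Definition le_star {I : Type} (x : M) (xs : I -> M) : Prop :=
  exists l : list I, l <> [] /\ mle M x (mfinsup xs l).

Definition shrinkable : Prop :=
  forall (x : M) (I : Type) (xs : I -> M), inhabited I -> mle M x (msup M I xs) ->
    exists (J : Type) (ys : J -> M),
      inhabited J /\ x = msup M J ys /\ forall j, le_star (ys j) xs.

Definition prec1 (F : Q -> Prop) (a b : M) : Prop :=
  exists (I : Type) (as_ : I -> M) (s : I -> Q),
    inhabited I /\ mle M a (msup M I as_) /\
    forall i, F (s i) /\ mle M (mact M (s i) (as_ i)) b.

Fixpoint precn (F : Q -> Prop) (n : nat) (a b : M) : Prop :=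
  match n with
  | O => a = b
  | S n' => exists c, precn F n' a c /\ prec1 F c b
  end.

Definition prec (F : Q -> Prop) (a b : M) : Prop :=
  exists n, 1 <= n /\ precn F n a b.

(** a ~ b in M_F *)
Definition equivF (F : Q -> Prop) (a b : M) : Prop := prec F a b /\ prec F b a.

Definition localizable (F : Q -> Prop) : Prop :=
  forall b : M, exists nb : nat, forall a : M, prec F a b -> precn F nb a b.

Definition one_step (F : Q -> Prop) : Prop :=
  localizable F /\ forall a b : M, prec F a b -> prec1 F a b.

End Defs.

(* Write F for the intersection of the F_k and let G(b) be the join of all y with
   t y <= b for some t in F; a <=^1_F b holds as soon as a <= G(b).  Since the
   elements w of the solidity witness W join to 1, it suffices to show w a <= G(b)
   for each such w.  If this failed, shrinkability and a <=^1_{F_n} b would produce,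
   step by step, a decreasing sequence v_0 = a >= v_1 >= ... and r_n in F_n with
   r_n v_(n+1) <= b and w v_n not below G(b).  The join of the r_n lies in every
   F_k, so local solidity gives t in F with t w <= r_(i_1) + ... + r_(i_m); then
   t (w v_N) <= b for N beyond all i_j, i.e. w v_N <= G(b), a contradiction. *)

From Stdlib Require Import List Lia Classical ClassicalEpsilon.
Import ListNotations.

Lemma inhabited_In {I : Type} (l : list I) : l <> [] -> inhabited {i : I | In i l}.
Proof.
  destruct l as [|i l]; [congruence|].
  intros _; constructor; exists i; left; reflexivity.
Qed.

Lemma dependent_choice_seq {A : Type} (P : A -> Prop) (R : nat -> A -> A -> Prop) (x0 : A) :
  P x0 -> (forall n x, P x -> exists y, P y /\ R n x y) ->
  exists f : nat -> A, f 0 = x0 /\ forall n, P (f n) /\ R n (f n) (f (S n)).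
Proof.
  intros H0 Hstep.
  set (next := fun n (x : {x | P x}) =>
         constructive_indefinite_description _ (Hstep n (proj1_sig x) (proj2_sig x))).
  set (g := fix g (n : nat) : {x | P x} :=
         match n with
         | 0 => exist _ x0 H0
         | S m => exist _ (proj1_sig (next m (g m))) (proj1 (proj2_sig (next m (g m))))
         end).
  exists (fun n => proj1_sig (g n)); split; [reflexivity|].
  intros n; split; [exact (proj2_sig (g n))|].
  exact (proj2 (proj2_sig (next n (g n)))).
Qed.

Section QuantaleFacts.
Variable Q : Quantale.

Lemma qsup_bool_le (x y : Q) : qle Q x y -> qsup Q bool (fun c => if c then x else y) = y.
Proof.
  intros Hxy; apply qle_antisym.
  - apply qsup_least; [exact (inhabits true)|].
    intros [|]; [exact Hxy | apply qle_refl].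
  - exact (qsup_ub Q bool (fun c => if c then x else y) (inhabits true) false).
Qed.

Lemma qmul_monor (z x y : Q) : qle Q x y -> qle Q (qmul Q z x) (qmul Q z y).
Proof.
  intros Hxy; rewrite <- (qsup_bool_le x y Hxy), qmul_sup by exact (inhabits true).
  exact (qsup_ub Q bool (fun c => qmul Q z (if c then x else y)) (inhabits true) true).
Qed.

Lemma qmul_le_r (x y : Q) : qle Q (qmul Q x y) y.
Proof.
  rewrite qmul_comm; eapply qle_trans; [apply (qmul_monor y x (qone Q)), qone_top|].
  rewrite qmul_comm, qmul_one; apply qle_refl.
Qed.

Lemma qmul_le_l (x y : Q) : qle Q (qmul Q x y) x.
Proof. rewrite qmul_comm; apply qmul_le_r. Qed.

Fixpoint qprod {I : Type} (s : I -> Q) (l : list I) : Q :=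
  match l with
  | [] => qone Q
  | i :: l' => qmul Q (s i) (qprod s l')
  end.

Lemma qprod_le {I : Type} (s : I -> Q) (l : list I) (i : I) :
  In i l -> qle Q (qprod s l) (s i).
Proof.
  induction l as [|j l IH]; simpl; [tauto|].
  intros [<-|Hi]; [apply qmul_le_l|].
  eapply qle_trans; [apply qmul_le_r | exact (IH Hi)].
Qed.

Lemma mfilter_qprod (F : Q -> Prop) {I : Type} (s : I -> Q) (l : list I) :
  mfilter Q F -> (forall i, F (s i)) -> F (qprod s l).
Proof. intros [H1 [_ Hmul]] Hs; induction l; simpl; auto. Qed.

End QuantaleFacts.

Section ModuleFacts.
Variable Q : Quantale.
Variable M : QModule Q.

Lemma msup_bool_le (x y : M) : mle M x y -> msup M bool (fun c => if c then x else y) = y.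
Proof.
  intros Hxy; apply mle_antisym.
  - apply msup_least; [exact (inhabits true)|].
    intros [|]; [exact Hxy | apply mle_refl].
  - exact (msup_ub Q M bool (fun c => if c then x else y) (inhabits true) false).
Qed.

Lemma mact_monol (q r : Q) (v : M) : qle Q q r -> mle M (mact M q v) (mact M r v).
Proof.
  intros Hqr; rewrite <- (qsup_bool_le Q q r Hqr), mact_supl by exact (inhabits true).
  exact (msup_ub Q M bool (fun c => mact M (if c then q else r) v) (inhabits true) true).
Qed.

Lemma mact_monor (q : Q) (v v' : M) : mle M v v' -> mle M (mact M q v) (mact M q v').
Proof.
  intros Hv; rewrite <- (msup_bool_le v v' Hv), mact_supr by exact (inhabits true).
  exact (msup_ub Q M bool (fun c => mact M q (if c then v else v')) (inhabits true) true).
Qed.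

Lemma mact_qsup_le {I : Type} (f : I -> Q) (v b : M) : inhabited I ->
  (forall i, mle M (mact M (f i) v) b) -> mle M (mact M (qsup Q I f) v) b.
Proof. intros HI Hf; rewrite mact_supl by exact HI; exact (msup_least Q M I _ b HI Hf). Qed.

Lemma mact_msup_le (q : Q) {I : Type} (f : I -> M) (b : M) : inhabited I ->
  (forall i, mle M (mact M q (f i)) b) -> mle M (mact M q (msup M I f)) b.
Proof. intros HI Hf; rewrite mact_supr by exact HI; exact (msup_least Q M I _ b HI Hf). Qed.

Lemma mact_qprod_mfinsup_le {I : Type} (s : I -> Q) (x : I -> M) (l : list I) (b : M) :
  l <> [] -> (forall i, mle M (mact M (s i) (x i)) b) ->
  mle M (mact M (qprod Q s l) (mfinsup Q M x l)) b.
Proof.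
  intros Hl Hb; apply mact_msup_le; [exact (inhabited_In l Hl)|].
  intros [i Hi]; simpl.
  eapply mle_trans; [apply mact_monol, (qprod_le Q s l i Hi) | apply Hb].
Qed.

Lemma mle_antitone_seq (v : nat -> M) :
  (forall n, mle M (v (S n)) (v n)) -> forall m n, m <= n -> mle M (v n) (v m).
Proof.
  intros Hv m n Hmn; induction Hmn as [|n _ IH]; [apply mle_refl|].
  exact (mle_trans Q M _ _ _ (Hv n) IH).
Qed.

(* Shrink [v <= a <= \sum a_i] into pieces each below finitely many [a_i]: some piece
   [v'] still has [w v'] not below [X], and the product of the finitely many [s_i]
   moves it below [b]. *)
Lemma prec1_refine (G : Q -> Prop) (a b v X : M) (w : Q) :
  shrinkable Q M -> mfilter Q G -> prec1 Q M G a b ->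
  mle M v a -> ~ mle M (mact M w v) X ->
  exists v' r, mle M v' v /\ G r /\ mle M (mact M r v') b /\ ~ mle M (mact M w v') X.
Proof.
  intros Hsh HG [I [as_ [s [HI [Has Hs]]]]] Hva Hbad.
  destruct (Hsh v I as_ HI (mle_trans Q M _ _ _ Hva Has)) as [J [ys [HJ [Hv Hys]]]].
  apply NNPP; intros Hnone; apply Hbad.
  rewrite Hv; apply mact_msup_le; [exact HJ|]; intros j.
  apply NNPP; intros Hj; apply Hnone.
  destruct (Hys j) as [l [Hl Hle]].
  exists (ys j), (qprod Q s l); repeat split.
  - rewrite Hv; exact (msup_ub Q M J ys HJ j).
  - apply mfilter_qprod; [exact HG | intros i; apply Hs].
  - eapply mle_trans; [apply mact_monor, Hle|].
    apply mact_qprod_mfinsup_le; [exact Hl | intros i; apply Hs].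
  - exact Hj.
Qed.

End ModuleFacts.

Section AbsorbedJoin.
Variable Q : Quantale.
Variable M : QModule Q.
Variable F : Q -> Prop.

Definition absorbed (b : M) : Type := {y : M | exists t, F t /\ mle M (mact M t y) b}.

Definition absorbed_sup (b : M) : M := msup M (absorbed b) (@proj1_sig _ _).

Lemma absorbed_sup_ub (t : Q) (y b : M) :
  F t -> mle M (mact M t y) b -> mle M y (absorbed_sup b).
Proof.
  intros Ht Hy.
  set (y' := exist (fun y => exists t, F t /\ mle M (mact M t y) b) y
               (ex_intro _ t (conj Ht Hy)) : absorbed b).
  exact (msup_ub Q M _ (@proj1_sig _ _) (inhabits y') y').
Qed.

Lemma prec1_of_le_absorbed_sup (a b : M) :
  F (qone Q) -> mle M a (absorbed_sup b) -> prec1 Q M F a b.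
Proof.
  intros H1 Ha.
  exists (absorbed b), (@proj1_sig _ _),
    (fun y : absorbed b => proj1_sig (constructive_indefinite_description _ (proj2_sig y))).
  split; [|split; [exact Ha|]].
  - constructor; exists b, (qone Q); split; [exact H1|].
    rewrite mact_one; apply mle_refl.
  - intros y; exact (proj2_sig (constructive_indefinite_description _ (proj2_sig y))).
Qed.

End AbsorbedJoin.

Definition solid_at (Q : Quantale) (F : Q -> Prop) (w : Q) : Prop :=
  forall (I : Type) (x : I -> Q), inhabited I -> F (qsup Q I x) ->
    exists t, F t /\ exists l : list I, l <> [] /\ qle Q (qmul Q t w) (qfinsup Q x l).

Section CountableIntersection.
Variable Q : Quantale.
Variable Fk : nat -> Q -> Prop.
Variable M : QModule Q.
Hypothesis Fk_mfilter : forall k, mfilter Q (Fk k).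
Hypothesis M_shrinkable : shrinkable Q M.

Let F (q : Q) : Prop := forall k, Fk k q.

Lemma mact_le_absorbed_sup (a b : M) (w : Q) :
  (forall k, prec1 Q M (Fk k) a b) -> solid_at Q F w ->
  mle M (mact M w a) (absorbed_sup Q M F b).
Proof.
  intros Hab Hw.
  set (X := absorbed_sup Q M F b).
  apply NNPP; intros Hbad.
  set (P := fun p : M * Q => mle M (fst p) a /\ ~ mle M (mact M w (fst p)) X).
  set (R := fun n (p p' : M * Q) =>
              mle M (fst p') (fst p) /\ Fk n (snd p') /\ mle M (mact M (snd p') (fst p')) b).
  destruct (dependent_choice_seq P R (a, qone Q)) as [f [_ Hf]].
  { split; [apply mle_refl | exact Hbad]. }
  { intros n [v q] [Hva Hv]; simpl in *.
    destruct (prec1_refine Q M (Fk n) a b v X w M_shrinkable (Fk_mfilter n) (Hab n) Hva Hv)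
      as [v' [r [Hv' [Hr [Hrb Hbad']]]]].
    exists (v', r); repeat split; simpl; try assumption.
    exact (mle_trans Q M _ _ _ Hv' Hva). }
  set (v := fun n => fst (f n)).
  set (r := fun n => snd (f (S n))).
  assert (Hanti : forall m n, m <= n -> mle M (v n) (v m))
    by (apply mle_antitone_seq; intros n; apply (Hf n)).
  assert (Hsup : F (qsup Q nat r)).
  { intros k; destruct (Fk_mfilter k) as [_ [Hup _]].
    apply (Hup (r k)); [apply (Hf k) | exact (qsup_ub Q nat r (inhabits 0) k)]. }
  destruct (Hw nat r (inhabits 0) Hsup) as [t [Ht [l [Hl Htw]]]].
  set (N := S (list_max l)).
  assert (HlN : forall i, In i l -> S i <= N).
  { intros i Hi.
    assert (Hlt : Forall (fun k => k < N) l) by (apply list_max_lt; [exact Hl | unfold N; lia]).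
    exact (proj1 (Forall_forall _ l) Hlt i Hi). }
  apply (proj2 (proj1 (Hf N))); fold (v N) X.
  apply (absorbed_sup_ub Q M F t); [exact Ht|].
  rewrite <- mact_assoc; eapply mle_trans; [apply mact_monol, Htw|].
  apply mact_qsup_le; [exact (inhabited_In l Hl)|]; intros [i Hi]; simpl.
  eapply mle_trans; [apply mact_monor, (Hanti (S i) N (HlN i Hi)) | apply (Hf i)].
Qed.

Lemma prec1_intersection (a b : M) :
  locally_solid Q F -> (forall k, prec1 Q M (Fk k) a b) -> prec1 Q M F a b.
Proof.
  intros [W [[w0 Hw0] [HW Hsolid]]] Hab.
  apply prec1_of_le_absorbed_sup; [intros k; apply (Fk_mfilter k)|].
  rewrite <- (mact_one Q M a), <- HW.
  apply mact_qsup_le; [exact (inhabits (exist _ w0 Hw0))|]; intros [w Hw]; simpl.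
  exact (mact_le_absorbed_sup a b w Hab (Hsolid w Hw)).
Qed.

End CountableIntersection.

Theorem mainTheorem11 (Q : Quantale) (Fk : nat -> Q -> Prop) (M : QModule Q) :
  (forall k, mfilter Q (Fk k)) ->
  locally_solid Q (fun q => forall k, Fk k q) ->
  shrinkable Q M ->
  (forall k, one_step Q M (Fk k)) ->
  (forall a b : M, (forall k, equivF Q M (Fk k) a b) ->
                   equivF Q M (fun q => forall k, Fk k q) a b) /\
  (forall a b : M, (forall k, prec1 Q M (Fk k) a b) ->
                   prec1 Q M (fun q => forall k, Fk k q) a b).
Proof.
  intros Hf Hsolid Hsh Hone.
  assert (Hprec1 := fun a b => prec1_intersection Q Fk M Hf Hsh a b Hsolid).
  assert (Hprec : forall x y : M, (forall k, prec Q M (Fk k) x y) ->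
                    prec Q M (fun q => forall k, Fk k q) x y).
  { intros x y Hxy; exists 1; split; [apply le_n|].
    exists x; split; [reflexivity|].
    apply Hprec1; intros k; exact (proj2 (Hone k) x y (Hxy k)). }
  split; [|exact Hprec1].
  intros a b Hab; split; apply Hprec; intros k; apply (Hab k).
Qed.
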